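(* Let $F$ be a Ferrers diagram, $T\in\mathsf{EWtab}(F)$ and $S=S(T)$. If $T_{jk}$ (with $j\in\mathsf{rows}(F)$, $k\in\mathsf{cols}(F)$, $j<k$) is a cornersupport in $T$, then there exist a row $j'\ne j$ and column $k'\ne k$ such that $S_{j'k'}$ induces $T_{jk}$ to be a cornersupport, and either (i) $(j,k),(j,k'),(j',k')$ are cells of $F$ with $T_{jk}=T_{jk'}=0$ and $T_{j'k'}=1$, or (ii) $(j,k),(j',k),(j',k')$ are cells of $F$ with $T_{jk}=T_{j'k}=1$ and $T_{j'k'}=0$.
   Context: Ferrers diagrams and graphs: a Ferrers diagram $F$ (English convention) of semiperimeter $n+1$ has rows and columns labeled by $0,\ldots,n$: the $n+1$ unit steps of its south-east boundary path, traversed from top-right to bottom-left, are labeled $0,\ldots,n$; a vertical step labels the row it bounds, a horizontal step the column it bounds (top row labeled $0$). $\mathsf{rows}(F)$, $\mathsf{cols}(F)$ are the label sets; $F$ has a cell in row $i$, column $j$ iff $i<j$. $G(F)$ has vertex set $\{0,\ldots,n\}$ with edges $\{i,j\}$ for $i\in\mathsf{rows}(F)$, $j\in\mathsf{cols}(F)$, $i<j$. Sandpile model on $G(F)$ with sink $0$: configurations $c\in\mathbb{N}^n$; non-sink $v$ unstable if $c_v\ge\deg(v)$; toppling sends one grain to each neighbour (grains to $0$ disappear); toppling the sink adds one grain to each neighbour of $0$. Canonical toppling of a recurrent configuration $c$: topple the sink ($U^{(0)}_c=\{0\}$), then alternately topple simultaneously all unstable vertices in $\mathsf{cols}(F)$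 ($V^{(1)}_c$), all unstable in $\mathsf{rows}(F)$ ($U^{(1)}_c$), etc.; $\mathsf{CanonTop}(c)=(U^{(0)}_c,V^{(1)}_c,U^{(1)}_c,\ldots)$ is an ordered partition of $\{0,\ldots,n\}$. EW-tableaux: $0/1$-fillings $T$ of $F$ ($T_{ij}$ = entry in row $i$, column $j$) with top row all 1s, a 0 in every other row, and no rectangle with 0s in two diagonally opposite corners and 1s in the other two; $\mathsf{EWtab}(F)$ is their set. $\phi_{TC}(T)$ is the (recurrent) configuration with $c_i$ = number of 1s in row $i$ ($i\in\mathsf{rows}(F)$), $c_i$ = number of 0s in column $i$ ($i\in\mathsf{cols}(F)$). $\mathsf{CanonTop}(T):=\mathsf{CanonTop}(\phi_{TC}(T))$. Supplementary tableau $S=S(T)$: the $|\mathsf{rows}(F)|\times|\mathsf{cols}(F)|$ array with $S_{ij}=1$ if row label $i$ lies in an earlier block of $\mathsf{CanonTop}(T)$ than column label $j$, else $0$ (it agrees with $T$ on cells of $F$). An entry $x$ of $T$ at $(j,k)$ is a cornersupport entry (and the cell a cornersupport) iff there exist a row $j'\ne j$ and column $k'\ne k$ with $S_{j'k'}\ne x$ and $S_{j'k}=S_{jk'}=x$; one says $S_{j'k'}$ induces $T_{jk}$ to be a cornersupport. *)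

From mathcomp Require Import all_boot.
Set Implicit Arguments. Unset Strict Implicit. Unset Printing Implicit Defensive.

(* A Ferrers diagram of semiperimeter n+1 is encoded by the set R of labels
   (in 'I_n.+1 = {0,...,n}) of its vertical boundary steps, i.e. rows(F) = R,
   cols(F) = complement of R.  The boundary path starts (top right) with the
   vertical step of the top row 0 and ends (bottom left) with a horizontal step. *)
Definition Ferrers (n : nat) (R : {set 'I_n.+1}) : bool :=
  (ord0 \in R) && (ord_max \notin R).

Definition cell n (R : {set 'I_n.+1}) (i j : 'I_n.+1) : bool :=
  [&& i \in R, j \notin R & i < j].

Definition adj n (R : {set 'I_n.+1}) (u v : 'I_n.+1) : bool :=
  cell R u v || cell R v u.

Definition deg n (R : {set 'I_n.+1}) (v : 'I_n.+1) : nat :=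
  #|[set u | adj R u v]|.

(* configurations: values on non-sink vertices (value at the sink 0 is
   irrelevant and ignored) *)
Definition config n := {ffun 'I_n.+1 -> nat}.

Definition topple n (R : {set 'I_n.+1}) (A : {set 'I_n.+1}) (c : config n)
  : config n :=
  [ffun v => c v - (if v \in A then deg R v else 0)
             + #|[set u in A | adj R u v]|].

Definition unstable n (R : {set 'I_n.+1}) (c : config n) (v : 'I_n.+1) : bool :=
  (v != ord0) && (deg R v <= c v).

Definition ct_select n (R : {set 'I_n.+1}) (c : config n) (k : nat)
  : {set 'I_n.+1} :=
  if odd k then [set v | (v \notin R) && unstable R c v]
  else [set v | (v \in R) && unstable R c v].

Fixpoint ct_conf n (R : {set 'I_n.+1}) (c : config n) (k : nat) : config n :=
  match k with
  | 0 => topple R [set ord0] c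
  | k'.+1 => topple R (ct_select R (ct_conf R c k') k) (ct_conf R c k')
  end.

Definition ct_block n (R : {set 'I_n.+1}) (c : config n) (k : nat)
  : {set 'I_n.+1} :=
  if k is k'.+1 then ct_select R (ct_conf R c k') k else [set ord0].

(* CanonTop(c) = (U^(0), V^(1), U^(1), ...): the sequence of nonempty blocks
   (2n+2 steps are more than enough for the process to terminate). *)
Definition CanonTop n (R : {set 'I_n.+1}) (c : config n) : seq {set 'I_n.+1} :=
  [seq B <- [seq ct_block R c k | k <- iota 0 (2 * n).+2] | B != set0].

Definition blockpos n (R : {set 'I_n.+1}) (c : config n) (v : 'I_n.+1) : nat :=
  find (fun B : {set 'I_n.+1} => v \in B) (CanonTop R c).

(* tableaux: 0/1 fillings, T i j = entry in row i column j (only the values on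
   cells of F matter) *)
Definition tableau n := 'I_n.+1 -> 'I_n.+1 -> bool.

Definition EWtab n (R : {set 'I_n.+1}) (T : tableau n) : Prop :=
  (forall j, cell R ord0 j -> T ord0 j) /\
  (forall i, i \in R -> i != ord0 -> exists j, cell R i j /\ T i j = false) /\
  (forall i1 i2 j1 j2, i1 != i2 -> j1 != j2 ->
     cell R i1 j1 -> cell R i1 j2 -> cell R i2 j1 -> cell R i2 j2 ->
     ~ [/\ T i1 j1 = false, T i2 j2 = false, T i1 j2 = true & T i2 j1 = true]).

Definition phiTC n (R : {set 'I_n.+1}) (T : tableau n) : config n :=
  [ffun v => if v == ord0 then 0
             else if v \in R then #|[set j | cell R v j & T v j]|
             else #|[set i | cell R i v & ~~ T i v]|].

Definition suppS n (R : {set 'I_n.+1}) (T : tableau n) (i j : 'I_n.+1) : bool :=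
  blockpos R (phiTC R T) i < blockpos R (phiTC R T) j.

Definition induces n (R : {set 'I_n.+1}) (T : tableau n) (j k j' k' : 'I_n.+1)
  : Prop :=
  [/\ j' \in R, k' \notin R, j' != j, k' != k &
      [/\ suppS R T j' k' != T j k, suppS R T j' k = T j k
        & suppS R T j k' = T j k]].

Definition cornersupport n (R : {set 'I_n.+1}) (T : tableau n) (j k : 'I_n.+1)
  : Prop :=
  exists j' k', induces R T j k j' k'.

From mathcomp Require Import all_boot zify.
Set Implicit Arguments. Unset Strict Implicit. Unset Printing Implicit Defensive.

(* Let t(v) be the step of the canonical toppling at which v topples (rows at
   even steps, columns at odd ones).  As long as nothing topples twice, a column
   becomes unstable exactly when all rows with a 1 in it have toppled, and a row
   exactly when all columns with a 0 in it have; by induction on the steps,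
   T_rc = [t(r) < t(c)], and since S only compares blocks, S_ij = [t(i) < t(j)].
   The EW condition guarantees that the process does not stall before every
   vertex has toppled, and then each column topples right after the last row
   with a 1 in it, each row right after the last column with a 0 in it.
   A cornersupport with T_jk = 1 forces t(j) < t(k') < t(j') < t(k); the row r
   toppling just before k and the column c toppling just before r are the
   witness of type (ii).  The case T_jk = 0 is symmetric and gives (i). *)

Lemma find_filter (X : Type) (P Q : pred X) (s : seq X) :
  subpred P Q -> find P (filter Q s) = count Q (take (find P s) s).
Proof.
move=> PQ; elim: s => [|x s IH] //=.
case Px: (P x); first by rewrite (PQ x Px) /= Px.
by case Qx: (Q x) => /=; rewrite ?Px Qx IH.
Qed.

Lemma leq_card_setIl (T : finType) (A B : {set T}) :
  (#|A| <= #|A :&: B|) = (A \subset B).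
Proof.
apply/idP/idP => [le_AB | /setIidPl-> //].
by apply/setIidPl/eqP; rewrite eqEcard subsetIl.
Qed.

Section CanonicalToppling.
Variables (n : nat) (R : {set 'I_n.+1}) (c : config n).

Local Notation conf := (ct_conf R c).
Local Notation block := (ct_block R c).

Fixpoint ct_toppled k : {set 'I_n.+1} :=
  if k is k'.+1 then ct_toppled k' :|: block k else [set ord0].

Lemma ct_confS k v : conf k.+1 v =
  conf k v - (if v \in block k.+1 then deg R v else 0)
  + #|[set u in block k.+1 | adj R u v]|.
Proof. by rewrite /= ffunE. Qed.

Lemma mem_ct_block k v : (v \in block k.+1) =
  [&& (v \in R) == ~~ odd k.+1, v != ord0 & deg R v <= conf k v].
Proof.
rewrite /ct_block /ct_select /unstable.
by case: (odd k.+1); rewrite inE; case: (v \in R).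
Qed.

Lemma ct_confS_idle k : block k.+1 = set0 -> conf k.+1 = conf k.
Proof.
move=> idle; apply/ffunP => v; rewrite ct_confS idle inE subn0.
rewrite (_ : [set u in set0 | _] = set0) ?cards0 ?addn0 //.
by apply/setP => u; rewrite !inE.
Qed.

Lemma ord0_ct_toppled k : ord0 \in ct_toppled k.
Proof. by elim: k => [|k IH] /=; rewrite !inE ?IH. Qed.

Lemma ct_block_toppled k : block k \subset ct_toppled k.
Proof. by case: k => [|k]; [apply: subxx | apply: subsetUr]. Qed.

Lemma ct_toppled_sub i j : i <= j -> ct_toppled i \subset ct_toppled j.
Proof.
move/subnKC <-; elim: (j - i) => [|d IH]; rewrite ?addn0 // addnS.
exact: subset_trans IH (subsetUl _ _).
Qed.

Definition ct_horizon := (2 * n).+2.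
Definition ct_blocks := [seq block i | i <- iota 0 ct_horizon].
(* Equal to ct_horizon when v does not topple within the steps CanonTop looks at. *)
Definition ct_time v := find (fun B : {set 'I_n.+1} => v \in B) ct_blocks.

Lemma mem_ct_toppled k v :
  (v \in ct_toppled k) =
  has (fun B : {set _} => v \in B) [seq block i | i <- iota 0 k.+1].
Proof.
elim: k => [|k IH]; first by rewrite /= orbF.
by rewrite [ct_toppled _]/= inE IH -[k.+2]addn1 iotaD map_cat has_cat /= orbF.
Qed.

Lemma ct_toppled_time k v :
  k < ct_horizon -> (v \in ct_toppled k) = (ct_time v <= k).
Proof.
move=> lt_k; rewrite mem_ct_toppled -(minn_idPl lt_k) -take_iota map_take.
by rewrite has_take_leq // size_map size_iota.
Qed.

Lemma ct_time_min k v : k < ct_horizon -> v \in block k -> ct_time v <= k.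
Proof.
move=> lt_k vk; rewrite -ct_toppled_time // mem_ct_toppled.
by apply/hasP; exists (block k) => //; apply: map_f; rewrite mem_iota leqnn.
Qed.

Lemma size_ct_blocks : size ct_blocks = ct_horizon.
Proof. by rewrite size_map size_iota. Qed.

Lemma nth_ct_blocks i : i < ct_horizon -> nth set0 ct_blocks i = block i.
Proof. by move=> lt_i; rewrite (nth_map 0) ?size_iota // nth_iota. Qed.

Lemma ct_time_block v : ct_time v < ct_horizon -> v \in block (ct_time v).
Proof.
move=> lt_v; rewrite -nth_ct_blocks //.
apply: (nth_find _ (a := fun B : {set _} => v \in B)).
by rewrite has_find size_ct_blocks.
Qed.

Lemma blockpos_ct_time v :
  blockpos R c v = count (fun B => B != set0) (take (ct_time v) ct_blocks).
Proof. by apply: find_filter => B vB; apply/set0Pn; exists v. Qed.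

Lemma blockpos_lt a b : ct_time a < ct_time b -> blockpos R c a < blockpos R c b.
Proof.
move=> lt_ab; have lt_a : ct_time a < ct_horizon.
  by rewrite -size_ct_blocks; apply: leq_trans lt_ab (find_size _ _).
rewrite !blockpos_ct_time -(subnKC (ltnW lt_ab)) takeD count_cat -addn1 leq_add2l.
rewrite (drop_nth set0) ?size_ct_blocks // -(subnSK lt_ab) /= nth_ct_blocks //.
suff -> : block (ct_time a) != set0 by [].
by apply/set0Pn; exists a; apply: ct_time_block.
Qed.

Definition ct_balanced k := forall v, v != ord0 ->
  conf k v + (if v \in ct_toppled k then deg R v else 0) =
  c v + #|[set u in ct_toppled k | adj R u v]|.

Hypothesis c_stable : forall v, v != ord0 -> c v < deg R v.

Lemma ct_balanced_fresh k :
  ct_balanced k -> forall v, v \in block k.+1 -> v \notin ct_toppled k.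
Proof.
move=> bal v; rewrite mem_ct_block => /and3P [_ v0 unst]; apply/negP => vD.
have := bal v v0; rewrite vD.
have : #|[set u in ct_toppled k | adj R u v]| <= deg R v.
  by apply: subset_leq_card; apply/subsetP => u; rewrite !inE => /andP [].
have := c_stable v0; lia.
Qed.

Lemma ct_balancedP k : ct_balanced k.
Proof.
elim: k => [|k IH] v v0; first by rewrite /= ffunE inE (negbTE v0) subn0 addn0.
have fresh := ct_balanced_fresh IH.
have -> : #|[set u in ct_toppled k.+1 | adj R u v]| =
    #|[set u in ct_toppled k | adj R u v]| + #|[set u in block k.+1 | adj R u v]|.
  rewrite (_ : [set u in _ | _] = [set u in ct_toppled k | adj R u v] :|:
                                   [set u in block k.+1 | adj R u v]); last first.
    by apply/setP => u; rewrite !inE andb_orl.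
  apply/eqP; rewrite (leq_card_setU _ _).2 disjoint_sym disjoints_subset.
  by apply/subsetP => u; rewrite !inE => /andP [/fresh/negbTE-> _].
rewrite ct_confS [ct_toppled _]/= inE.
have := IH v v0; case vB: (v \in block k.+1); last by rewrite orbF subn0; lia.
rewrite orbT (negbTE (fresh v vB)); move: vB; rewrite mem_ct_block => /and3P [_ _].
lia.
Qed.

Lemma ct_block_fresh k v : v \in block k.+1 -> v \notin ct_toppled k.
Proof. exact: ct_balanced_fresh (ct_balancedP k) v. Qed.

Lemma ct_conf_untoppled k v : v != ord0 -> v \notin ct_toppled k ->
  conf k v = c v + #|[set u in ct_toppled k | adj R u v]|.
Proof. by move=> v0 vD; rewrite -(ct_balancedP k v0) (negbTE vD) addn0. Qed.

End CanonicalToppling.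

Section NoRectangle.
Variables (n : nat) (R : {set 'I_n.+1}) (T : tableau n).
Hypothesis no_rectangle : forall i1 i2 j1 j2, i1 != i2 -> j1 != j2 ->
  cell R i1 j1 -> cell R i1 j2 -> cell R i2 j1 -> cell R i2 j2 ->
  ~ [/\ T i1 j1 = false, T i2 j2 = false, T i1 j2 = true & T i2 j1 = true].

(* The rows and columns that never topple would form such a pair (U, V).
   Induction on #|V|: the rows of U with a 1 in the rightmost column of V,
   together with the other columns of V that have a 1 in one of these rows,
   form a smaller pair with the same property. *)
Lemma blocked_cols_empty (U V : {set 'I_n.+1}) :
  (forall r, r \in U -> exists2 c, c \in V & cell R r c && ~~ T r c) ->
  (forall c, c \in V -> exists2 r, r \in U & cell R r c && T r c) ->
  V = set0.
Proof.
have [m] := ubnP #|V|; elim: m U V => // m IH U V ltV hU hV.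
case: (set_0Vmem V) => [-> // | [c0 c0V]].
case: (@arg_maxnP _ c0 (mem V) val c0V) => cm cmV cm_max.
have cmR : cm \notin R by have [r _ /andP [/and3P []]] := hV cm cmV.
have cell_cm r : r \in U -> cell R r cm.
  move=> rU; have [c cV /andP [/and3P [rR _ ltrc] _]] := hU r rU.
  by rewrite /cell rR cmR (leq_trans ltrc (cm_max c cV)).
pose U' := [set r in U | T r cm].
pose V' := [set c in V :\ cm | [exists r in U', cell R r c && T r c]].
have hU' r : r \in U' -> exists2 c, c \in V' & cell R r c && ~~ T r c.
  rewrite inE => /andP [rU Trcm].
  have [c cV /andP [rc nTrc]] := hU r rU.
  have c_cm : c != cm by apply: contraNneq nTrc => ->.
  have [r' r'U /andP [r'c Tr'c]] := hV c cV.
  have r'_r : r' != r by apply: contraTneq Tr'c => ->.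
  have Tr'cm : T r' cm.
    apply/negPn/negP => /negbTE nTr'cm; rewrite eq_sym in c_cm.
    apply: (no_rectangle r'_r c_cm (cell_cm r' r'U) r'c (cell_cm r rU) rc).
    by split=> //; apply: negbTE.
  exists c; last by rewrite rc.
  rewrite !inE c_cm cV /=.
  by apply/exists_inP; exists r'; rewrite ?inE ?r'U ?Tr'cm ?r'c.
have hV' c : c \in V' -> exists2 r, r \in U' & cell R r c && T r c.
  by rewrite inE => /andP [_ /exists_inP [r]]; exists r.
have ltV' : #|V'| < m.
  rewrite -ltnS (leq_trans _ ltV) // ltnS proper_card //.
  by apply: sub_proper_trans (properD1 cmV); apply/subsetP => c /setIdP [].
have [r rU /andP [_ Trcm]] := hV cm cmV.
have rU' : r \in U' by rewrite inE rU Trcm.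
by have [c] := hU' r rU'; rewrite (IH U' V' ltV' hU' hV') inE.
Qed.
End NoRectangle.

Section EWTableau.
Variables (n : nat) (R : {set 'I_n.+1}) (T : tableau n).
Hypotheses (HF : Ferrers R) (HE : EWtab R T).

Local Notation c0 := (phiTC R T).
Local Notation conf := (ct_conf R c0).
Local Notation block := (ct_block R c0).
Local Notation D := (ct_toppled R c0).
Local Notation tm := (ct_time R c0).

Lemma ord0_row : ord0 \in R.
Proof. by case/andP: HF. Qed.

Lemma col_neq0 c : c \notin R -> c != ord0.
Proof. by apply: contraNneq => ->; exact: ord0_row. Qed.

Lemma cell_ord0 c : c \notin R -> cell R ord0 c.
Proof. by move=> cR; rewrite /cell ord0_row cR lt0n col_neq0. Qed.

Lemma T_ord0 c : c \notin R -> T ord0 c.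
Proof. by move=> cR; case: HE => /(_ c (cell_ord0 cR)). Qed.

Definition col_ones c := [set r | cell R r c & T r c].
Definition col_zeros c := [set r | cell R r c & ~~ T r c].
Definition row_ones r := [set c | cell R r c & T r c].
Definition row_zeros r := [set c | cell R r c & ~~ T r c].

Lemma deg_col c : c \notin R -> deg R c = #|col_ones c| + #|col_zeros c|.
Proof.
move=> cR; rewrite /deg -(cardsID [set r | T r c]).
by congr (_ + _); apply: eq_card => u; rewrite !inE /adj {2}/cell (negbTE cR) orbF;
  case: (T u c); case: (cell R u c).
Qed.

Lemma deg_row r : r \in R -> deg R r = #|row_ones r| + #|row_zeros r|.
Proof.
move=> rR; rewrite /deg -(cardsID [set c | T r c]).
by congr (_ + _); apply: eq_card => u; rewrite !inE /adj {1}/cell rR andbF;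
  case: (T r u); case: (cell R r u).
Qed.

Lemma phiTC_col c : c \notin R -> c0 c = #|col_zeros c|.
Proof. by move=> cR; rewrite ffunE (negbTE (col_neq0 cR)) (negbTE cR). Qed.

Lemma phiTC_row r : r \in R -> r != ord0 -> c0 r = #|row_ones r|.
Proof. by move=> rR r0; rewrite ffunE (negbTE r0) rR. Qed.

Lemma phiTC_stable v : v != ord0 -> c0 v < deg R v.
Proof.
move=> v0; case: (boolP (v \in R)) => vR.
  rewrite phiTC_row // deg_row // -[X in X < _]addn0 ltn_add2l card_gt0.
  case: HE => _ [/(_ v vR v0) [c [vc Tvc]] _].
  by apply/set0Pn; exists c; rewrite inE vc Tvc.
rewrite phiTC_col // deg_col // -[X in X < _]add0n ltn_add2r card_gt0.
by apply/set0Pn; exists ord0; rewrite inE cell_ord0 // T_ord0.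
Qed.

Definition ct_respects_T k := forall r c, cell R r c ->
  (c \in D k -> r \notin D k -> T r c = false) /\ (r \in D k -> c \notin D k -> T r c).

Lemma col_unstableE k c : ct_respects_T k -> c \notin R -> c \notin D k ->
  (deg R c <= conf k c) = (col_ones c \subset D k).
Proof.
move=> resp cR cD.
rewrite (ct_conf_untoppled phiTC_stable (col_neq0 cR) cD) phiTC_col // deg_col //.
have -> : [set u in D k | adj R u c] = col_ones c :&: D k.
  apply/setP => u; rewrite !inE /adj {2}/cell (negbTE cR) orbF andbC.
  case: (boolP (cell R u c)) => //= uc.
  by case: (boolP (u \in D k)) => uD; rewrite ?andbF ?(proj2 (resp u c uc) uD cD).
by rewrite addnC leq_add2l leq_card_setIl.
Qed.

Lemma row_unstableE k r :
  ct_respects_T k -> r \in R -> r != ord0 -> r \notin D k ->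
  (deg R r <= conf k r) = (row_zeros r \subset D k).
Proof.
move=> resp rR r0 rD.
rewrite (ct_conf_untoppled phiTC_stable r0 rD) phiTC_row // deg_row //.
have -> : [set u in D k | adj R u r] = row_zeros r :&: D k.
  apply/setP => u; rewrite !inE /adj {1}/cell rR andbF andbC.
  case: (boolP (cell R r u)) => //= ru.
  by case: (boolP (u \in D k)) => uD; rewrite ?andbF ?(proj1 (resp r u ru) uD rD).
by rewrite leq_add2l leq_card_setIl.
Qed.

Lemma ct_respects_TP k : ct_respects_T k.
Proof.
elim: k => [|k IH] r c rc; have [rR cR _] := and3P rc.
  split; rewrite inE => /eqP E; first by rewrite E ord0_row in cR.
  by rewrite E T_ord0.
have memS v : (v \in D k.+1) = (v \in D k) || (v \in block k.+1) by rewrite /= inE.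
split; rewrite !memS negb_or.
  case/orP => [cD /andP [rD _] | cB /andP [rD _]]; first exact: (IH r c rc).1.
  have cD := ct_block_fresh phiTC_stable cB.
  move: cB; rewrite mem_ct_block => /and3P [_ _].
  rewrite col_unstableE // => /subsetP sub.
  by apply: contraNF rD => Trc; apply: sub; rewrite inE rc Trc.
case/orP => [rD /andP [cD _] | rB /andP [cD _]]; first exact: (IH r c rc).2.
have rD := ct_block_fresh phiTC_stable rB.
move: rB; rewrite mem_ct_block => /and3P [_ r0].
rewrite row_unstableE // => /subsetP sub.
by apply: contraNT cD => nTrc; apply: sub; rewrite inE rc nTrc.
Qed.

Lemma ct_stalled_toppled k :
  (forall v, v != ord0 -> conf k v < deg R v) -> forall v, v \in D k.
Proof.
move=> stalled; have [_ [_ no_rect]] := HE.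
pose U := [set r in R | r \notin D k]; pose V := [set c in ~: R | c \notin D k].
have hU r : r \in U -> exists2 c, c \in V & cell R r c && ~~ T r c.
  rewrite inE => /andP [rR rD].
  have r0 : r != ord0 by apply: contraNneq rD => ->; apply: ord0_ct_toppled.
  have := stalled r r0; rewrite ltnNge (row_unstableE (ct_respects_TP k)) //.
  case/subsetPn => c; rewrite inE => /andP [rc nTrc] cD.
  exists c; last by rewrite rc.
  by case/and3P: rc => _ cR _; rewrite !inE cR.
have hV c : c \in V -> exists2 r, r \in U & cell R r c && T r c.
  rewrite !inE => /andP [cR cD].
  have := stalled c (col_neq0 cR); rewrite ltnNge (col_unstableE (ct_respects_TP k)) //.
  case/subsetPn => r'; rewrite inE => /andP [r'c Tr'c] r'D.
  exists r'; last by rewrite r'c.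
  by case/and3P: r'c => r'R _ _; rewrite !inE r'R.
have V0 := blocked_cols_empty no_rect hU hV.
move=> v; apply/negPn/negP => vD; case: (boolP (v \in R)) => vR.
  have vU : v \in U by rewrite inE vR.
  by have [c] := hU v vU; rewrite V0 inE.
have : v \in V by rewrite !inE vR.
by rewrite V0 inE.
Qed.

Lemma ct_toppled_grow k : ~~ [forall v, v \in D k] -> #|D k| < #|D k.+2|.
Proof.
move=> not_all; have sub_k2 := ct_toppled_sub R c0 (leqW (leqnSn k)).
case: (set_0Vmem (block k.+1)) => [idle1 | [v vB]]; last first.
  rewrite proper_card // properE sub_k2; apply/subsetPn; exists v.
    apply: (subsetP (ct_toppled_sub R c0 (leqnSn _))).
    exact: (subsetP (ct_block_toppled R c0 _)) v vB.
  by have := ct_block_fresh phiTC_stable vB.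
case: (set_0Vmem (block k.+2)) => [idle2 | [v vB]]; last first.
  rewrite proper_card // properE sub_k2; apply/subsetPn; exists v.
    exact: (subsetP (ct_block_toppled R c0 _)).
  apply: contra (ct_block_fresh phiTC_stable vB).
  exact: (subsetP (ct_toppled_sub R c0 (leqnSn k))).
case/negP: not_all; apply/forallP/ct_stalled_toppled => v v0.
rewrite ltnNge; apply/negP => unst.
have := mem_ct_block R c0 k.+1 v; rewrite (ct_confS_idle idle1) idle2 inE v0 unst.
have := mem_ct_block R c0 k v; rewrite idle1 inE v0 unst.
by rewrite !andbT /=; case: (v \in R); case: (odd k).
Qed.

Lemma ct_toppled_all v : v \in D (2 * n).
Proof.
have grow m : (forall v, v \in D (2 * m)) \/ m < #|D (2 * m)|.
  elim: m => [|m IH]; first by right; rewrite cards1.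
  have -> : 2 * m.+1 = (2 * m).+2 by lia.
  have sub_m := ct_toppled_sub R c0 (leqW (leqnSn (2 * m))).
  case: (boolP [forall v, v \in D (2 * m)]) => [/forallP all_m | not_all].
    by left=> u; apply: (subsetP sub_m).
  case: IH => [all_m | lt_m]; first by case/forallP: not_all.
  by right; have := ct_toppled_grow not_all; lia.
case: (grow n) => [// | lt_n]; suff -> : D (2 * n) = setT by rewrite inE.
by apply/eqP; rewrite eqEcard subsetT cardsT card_ord.
Qed.

Lemma ct_time_lt v : tm v < ct_horizon n.
Proof.
have := ct_toppled_all v; rewrite (ct_toppled_time R c0 v (ltnW (ltnSn _))).
by rewrite /ct_horizon; lia.
Qed.

Lemma ct_time_ord0 : tm ord0 = 0.
Proof. by apply/eqP; rewrite -leqn0 ct_time_min // inE. Qed.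

Lemma ct_time_parity v : odd (tm v) = (v \notin R).
Proof.
have := ct_time_block (ct_time_lt v); case: (tm v) => [|t].
  by rewrite inE => /eqP ->; rewrite ord0_row.
by rewrite mem_ct_block => /and3P [/eqP -> _ _]; rewrite negbK.
Qed.

Lemma ct_time_neq r c : r \in R -> c \notin R -> tm r != tm c.
Proof.
move=> rR cR; apply/eqP => eq_rc.
by move: (ct_time_parity r); rewrite eq_rc ct_time_parity cR rR.
Qed.

Lemma suppS_ct_time i j : i \in R -> j \notin R -> suppS R T i j = (tm i < tm j).
Proof.
move=> iR jR; rewrite /suppS.
case: (ltngtP (tm i) (tm j)) (ct_time_neq iR jR) => [lt_ij | lt_ji | //] _.
  by rewrite blockpos_lt.
by apply/negbTE; rewrite -leqNgt ltnW // blockpos_lt.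
Qed.

Lemma T_ct_time r c : cell R r c -> T r c = (tm r < tm c).
Proof.
move=> rc; have [rR cR _] := and3P rc.
case: (ltngtP (tm r) (tm c)) (ct_time_neq rR cR) => [lt_rc | lt_cr | //] _.
  apply: (ct_respects_TP (tm r) rc).2; rewrite ct_toppled_time ?ct_time_lt //.
  by rewrite -ltnNge.
apply: (ct_respects_TP (tm c) rc).1; rewrite ct_toppled_time ?ct_time_lt //.
by rewrite -ltnNge.
Qed.

Lemma col_ct_time_pred c : c \notin R -> exists2 r, cell R r c & tm c = (tm r).+1.
Proof.
move=> cR; have ord0_one : cell R ord0 c && T ord0 c by rewrite cell_ord0 // T_ord0.
case: (@arg_maxnP _ ord0 (fun r => cell R r c && T r c) tm ord0_one).
move=> r /andP [rc Trc] r_max; exists r => //.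
have lt_rc : tm r < tm c by rewrite -T_ct_time.
have lt_r1 : (tm r).+1 < ct_horizon n := leq_ltn_trans lt_rc (ct_time_lt c).
have [rR _ _] := and3P rc.
have cB : c \in block (tm r).+1.
  have inD u : (u \in D (tm r)) = (tm u <= tm r) := ct_toppled_time R c0 u (ltnW lt_r1).
  have cD : c \notin D (tm r) by rewrite inD -ltnNge.
  rewrite mem_ct_block col_neq0 //= (negbTE cR) negbK ct_time_parity rR /=.
  rewrite (col_unstableE (ct_respects_TP _) cR cD); apply/subsetP => u.
  by rewrite inE inD; apply: r_max.
by apply/eqP; rewrite eqn_leq lt_rc ct_time_min.
Qed.

Lemma row_ct_time_pred r :
  r \in R -> r != ord0 -> exists2 c, cell R r c & tm r = (tm c).+1.
Proof.
move=> rR r0; case: HE => _ [/(_ r rR r0) [c1 [rc1 Tc1]] _].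
have one_zero : cell R r c1 && ~~ T r c1 by rewrite rc1 Tc1.
case: (@arg_maxnP _ c1 (fun c => cell R r c && ~~ T r c) tm one_zero).
move=> c /andP [rc nTrc] c_max; exists c => //.
have [_ cR _] := and3P rc.
have lt_cr : tm c < tm r.
  by rewrite ltn_neqAle eq_sym ct_time_neq // leqNgt -T_ct_time.
have lt_c1 : (tm c).+1 < ct_horizon n := leq_ltn_trans lt_cr (ct_time_lt r).
have rB : r \in block (tm c).+1.
  have inD u : (u \in D (tm c)) = (tm u <= tm c) := ct_toppled_time R c0 u (ltnW lt_c1).
  have rD : r \notin D (tm c) by rewrite inD -ltnNge.
  rewrite mem_ct_block r0 rR /= negbK ct_time_parity cR /=.
  rewrite (row_unstableE (ct_respects_TP _) rR r0 rD); apply/subsetP => u.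
  by rewrite inE inD; apply: c_max.
by apply/eqP; rewrite eqn_leq lt_cr ct_time_min.
Qed.

Lemma induces_ct_time j k j' k' :
  j \in R -> k \notin R -> j' \in R -> k' \notin R ->
  induces R T j k j' k' <->
  if T j k then [&& tm j < tm k', tm k' < tm j' & tm j' < tm k]
  else [&& tm k < tm j', tm j' < tm k' & tm k' < tm j].
Proof.
move=> jR kR j'R k'R; rewrite /induces !suppS_ct_time //.
have := ct_time_neq j'R k'R; have := ct_time_neq j'R kR.
have := ct_time_neq jR k'R; have := ct_time_neq jR kR.
case: (T j k) => ne1 ne2 ne3 ne4; split=> [[_ _ _ _ []] | chain]; try lia.
all: have ne_j : j' != j by apply: contraTneq chain => ->; lia.
all: have ne_k : k' != k by apply: contraTneq chain => ->; lia.
all: by split=> //; split; lia.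
Qed.

Lemma col_ct_time_pred2 k : k \notin R -> 1 < tm k ->
  exists r c, [/\ cell R r k, cell R r c, tm k = (tm r).+1 & tm r = (tm c).+1].
Proof.
move=> kR lt1k; have [r rk tk] := col_ct_time_pred kR; have [rR _ _] := and3P rk.
have r0 : r != ord0 by apply: contraTneq lt1k => r0; rewrite tk r0 ct_time_ord0.
by have [c rc tr] := row_ct_time_pred rR r0; exists r, c.
Qed.

Lemma row_ct_time_pred2 j : j \in R -> 0 < tm j ->
  exists r c, [/\ cell R j c, cell R r c, tm j = (tm c).+1 & tm c = (tm r).+1].
Proof.
move=> jR gt0j.
have j0 : j != ord0 by apply: contraTneq gt0j => ->; rewrite ct_time_ord0.
have [c jc tj] := row_ct_time_pred jR j0; have [_ cR _] := and3P jc.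
by have [r rc tc] := col_ct_time_pred cR; exists r, c.
Qed.

End EWTableau.

Theorem lemma4p17 (n : nat) (R : {set 'I_n.+1}) (T : tableau n)
  (j k : 'I_n.+1) :
  Ferrers R -> EWtab R T -> cell R j k -> cornersupport R T j k ->
  exists j' k', induces R T j k j' k' /\
    ((cell R j k' /\ cell R j' k' /\
      T j k = false /\ T j k' = false /\ T j' k' = true) \/
     (cell R j' k /\ cell R j' k' /\
      T j k = true /\ T j' k = true /\ T j' k' = false)).
Proof.
move=> HF HE jk [j' [k' ind]]; have [jR kR _] := and3P jk; have [j'R k'R _ _ _] := ind.
move: ind; rewrite (induces_ct_time HF HE jR kR j'R k'R) (T_ct_time HF HE jk).
case: ifP => lt_jk chain.
  have lt1k : 1 < ct_time R (phiTC R T) k by lia.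
  have [r [c [rk rc tk tr]]] := col_ct_time_pred2 HF HE kR lt1k.
  have [rR cR _] := and3P rc.
  exists r, c; split.
    by rewrite (induces_ct_time HF HE jR kR rR cR) (T_ct_time HF HE jk) lt_jk; lia.
  by right; rewrite !(T_ct_time HF HE) //; do !split=> //; lia.
have gt0j : 0 < ct_time R (phiTC R T) j by lia.
have [r [c [jc rc tj tc]]] := row_ct_time_pred2 HF HE jR gt0j.
have [rR cR _] := and3P rc.
exists r, c; split.
  by rewrite (induces_ct_time HF HE jR kR rR cR) (T_ct_time HF HE jk) lt_jk; lia.
by left; rewrite !(T_ct_time HF HE) //; do !split=> //; lia.
Qed.
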